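(* Let $m\geq 13$ and $n\geq 13$ be integers with $m\not\equiv 2\pmod 3$ and $n\not\equiv 2\pmod 3$. Then $\gamma_{sR}(C_m\vee C_n)=3$.
   Context: $C_n$ denotes the cycle on $n$ vertices. For a graph $G=(V,E)$ and $x\in V$, $N_G[x]=\{x\}\cup\{y: xy\in E\}$. A signed Roman dominating function (SRDF) on $G$ is a function $f:V\to\{-1,1,2\}$ such that (a) $\sum_{y\in N_G[x]}f(y)\geq 1$ for every $x\in V$, and (b) every vertex $x$ with $f(x)=-1$ is adjacent to at least one vertex $y$ with $f(y)=2$. The weight of $f$ is $\sum_{x\in V}f(x)$, and $\gamma_{sR}(G)$ is the minimum weight of an SRDF on $G$. The join $G_1\vee G_2$ of two graphs has vertex set $V(G_1)\cup V(G_2)$ (disjoint union) and edge set $E(G_1)\cup E(G_2)\cup\{uv: u\in V(G_1), v\in V(G_2)\}$. *)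

From mathcomp Require Import all_boot all_order all_algebra.
Set Implicit Arguments. Unset Strict Implicit. Unset Printing Implicit Defensive.
Import Order.TTheory GRing.Theory Num.Theory.
Local Open Scope ring_scope.

Definition closed_nbhd (T : finType) (adj : rel T) (x : T) : {set T} :=
  [set y | (y == x) || adj x y].

Definition is_SRDF (T : finType) (adj : rel T) (f : T -> int) : Prop :=
  (forall x, f x \in [:: -1; 1; 2]) /\
  (forall x, 1 <= \sum_(y in closed_nbhd adj x) f y) /\
  (forall x, f x = -1 -> exists y, adj x y /\ f y = 2).

Definition srdf_weight (T : finType) (f : T -> int) : int := \sum_(x : T) f x.

Definition signed_roman_domination_number_is (T : finType) (adj : rel T) (k : int) : Prop :=
  (exists f, is_SRDF adj f /\ srdf_weight f = k) /\
  (forall f, is_SRDF adj f -> k <= srdf_weight f).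

Definition cycle_adj (k : nat) : rel 'I_k :=
  fun i j => (j == (i.+1 %% k)%N :> nat) || (i == (j.+1 %% k)%N :> nat).
Arguments cycle_adj : clear implicits.

Definition join_adj (T1 T2 : finType) (a1 : rel T1) (a2 : rel T2) : rel (T1 + T2)%type :=
  fun u v => match u, v with
             | inl x, inl y => a1 x y
             | inr x, inr y => a2 x y
             | _, _ => true
             end.

From mathcomp Require Import all_boot all_order all_algebra.
From mathcomp Require Import zify ring.
Set Implicit Arguments. Unset Strict Implicit. Unset Printing Implicit Defensive.
Import Order.TTheory GRing.Theory Num.Theory.
Local Open Scope ring_scope.

(* Write F and G for the weights of an SRDF f on the C_m side and on the C_n
   side. The closed neighbourhood of a vertex of C_m is a window of three
   consecutive cycle vertices plus the whole C_n, so every window of f on C_m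
   has sum at least 1 - G; as each vertex lies in three windows,
   m (1 - G) <= 3 F, and symmetrically n (1 - F) <= 3 G. For m, n >= 13 and
   weight F + G <= 2 this forces F = G = 1. Then f on C_m is a cyclic
   {-1,1,2}-sequence of sum 1 whose windows are all nonnegative, and the
   windows sum to 3. If m = 3q, the windows starting in one residue class
   tile the cycle, so each window is at most 1; the four windows around a
   value 1 are then at least 1 each (a window through a 1 cannot vanish),
   too many; and without any 1 all windows vanish. If m = 3q + 1, every value
   is at most 1, so every window is odd, hence at least 1, and m > 3.
   Weight 3 is attained by the block patterns (2,-1,-1,...) of sums 1 and 2. *)

Definition periodic (N : nat) (g : nat -> int) := forall k, g (k + N)%N = g k.

Definition window3 (g : nat -> int) (k : nat) : int := g k + g k.+1 + g k.+2.

Lemma periodic_mod N g k : periodic N g -> g (k %% N)%N = g k.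
Proof.
move=> gP; rewrite {2}(divn_eq k N); elim: (k %/ N)%N => [|d IH].
  by rewrite mul0n add0n.
by rewrite IH mulSn -addnA [(N + _)%N]addnC gP.
Qed.

Lemma periodic_sum_shift N c g : periodic N g ->
  \sum_(0 <= k < N) g (k + c)%N = \sum_(0 <= k < N) g k.
Proof.
move=> gP; elim: c => [|c IH]; first by apply: eq_bigr => k _; rewrite addn0.
case: N gP IH => [|N] gP IH; first by rewrite !big_geq.
rewrite big_nat_recr // -IH big_nat_recl // addrC; congr (_ + _).
  by apply: eq_bigr => k _; rewrite addSnnS.
by rewrite add0n (_ : (N + c.+1 = c + N.+1)%N) ?gP //; lia.
Qed.

Lemma periodic_window3 N g : periodic N g -> periodic N (window3 g).
Proof. by move=> gP k; rewrite /window3 -!addSn !gP. Qed.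

Lemma sum_window3 N g : periodic N g ->
  \sum_(0 <= k < N) window3 g k = 3 * \sum_(0 <= k < N) g k.
Proof.
move=> gP; rewrite /window3 !big_split /=.
have -> : \sum_(0 <= k < N) g k.+1 = \sum_(0 <= k < N) g k.
  by rewrite -(periodic_sum_shift 1 gP); apply: eq_bigr => k _; rewrite addn1.
have -> : \sum_(0 <= k < N) g k.+2 = \sum_(0 <= k < N) g k.
  by rewrite -(periodic_sum_shift 2 gP); apply: eq_bigr => k _; rewrite addn2.
ring.
Qed.

Lemma sum_window3_blocks q j g :
  \sum_(0 <= t < q) window3 g (3 * t + j)%N = \sum_(0 <= k < 3 * q) g (k + j)%N.
Proof.
elim: q => [|q IH]; first by rewrite !big_geq.
rewrite big_nat_recr // IH (_ : (3 * q.+1 = (3 * q).+2.+1)%N); last lia.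
rewrite !big_nat_recr //= /window3 -!addrA.
by congr (_ + (_ + (_ + _))); congr g; lia.
Qed.

Lemma periodic_window_bound N g (G : int) : periodic N g ->
  (forall k, 1 <= window3 g k + G) -> N%:Z * (1 - G) <= 3 * \sum_(0 <= k < N) g k.
Proof.
move=> gP win_g; rewrite -sum_window3 //.
have : \sum_(0 <= k < N) (1 - G) <= \sum_(0 <= k < N) window3 g k.
  by apply: ler_sum => k _; have := win_g k; lia.
by rewrite sumr_const_nat subn0 -mulr_natr mulrC natz.
Qed.

Lemma srdf_valueP (x : int) : x \in [:: -1; 1; 2] -> [\/ x = -1, x = 1 | x = 2].
Proof. by rewrite !inE => /or3P [] /eqP ->; [apply: Or31 | apply: Or32 | apply: Or33]. Qed.

Lemma window_ge1_of_mem1 (a b c : int) :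
  a \in [:: -1; 1; 2] -> b \in [:: -1; 1; 2] -> c \in [:: -1; 1; 2] ->
  0 <= a + b + c -> [\/ a = 1, b = 1 | c = 1] -> 1 <= a + b + c.
Proof. by move=> /srdf_valueP[]->/srdf_valueP[]->/srdf_valueP[]-> ? []; lia. Qed.

Section UnitSumNonnegWindows.

Variables (N : nat) (g : nat -> int).
Hypotheses (N_ge4 : (4 <= N)%N) (gP : periodic N g)
  (g_val : forall k, g k \in [:: -1; 1; 2])
  (sum_g : \sum_(0 <= k < N) g k = 1) (window_ge0 : forall k, 0 <= window3 g k).

Let sum_windows : \sum_(0 <= k < N) window3 g k = 3.
Proof. by rewrite sum_window3 // sum_g mulr1. Qed.

Lemma window3_le1_mod3_eq0 : (N %% 3 = 0)%N -> forall x, window3 g x <= 1.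
Proof.
move=> N3 x; have N_eq : N = (3 * (N %/ 3).-1.+1)%N by lia.
have := sum_window3_blocks (N %/ 3).-1.+1 x g.
rewrite -N_eq (periodic_sum_shift x gP) sum_g big_nat_recl // muln0 add0n => <-.
by rewrite lerDl sumr_ge0.
Qed.

Lemma nonnegative_windows_mod3_eq0 : (N %% 3 = 0)%N -> False.
Proof.
move=> N3; have win_le1 := window3_le1_mod3_eq0 N3.
case: (boolP [exists k : 'I_N, g k == 1]).
- case/existsP => x /eqP gx1.
  set z := (x + N - 2)%N.
  have gz2 : g z.+2 = 1 by rewrite (_ : z.+2 = x + N)%N ?gP //; rewrite /z; lia.
  have win_ge1 k : [\/ g k = 1, g k.+1 = 1 | g k.+2 = 1] -> 1 <= window3 g k.
    exact: window_ge1_of_mem1 (g_val _) (g_val _) (g_val _) (window_ge0 k).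
  have w0 : 1 <= window3 g z by apply: win_ge1; apply: Or33.
  have w1 : 1 <= window3 g z.+1 by apply: win_ge1; apply: Or32.
  have w2 : window3 g z.+2 = 1.
    by apply/eqP; rewrite eq_le win_le1 win_ge1 //; apply: Or31.
  have w3 : 1 <= window3 g z.+3.
    move: w2; rewrite /window3 gz2 => w2; apply: win_ge1.
    move: (g_val z.+3) (g_val z.+4) w2 => /srdf_valueP[]->/srdf_valueP[]-> //= w2;
      by [apply: Or31 | apply: Or32 | lia].
  have : window3 g z + window3 g z.+1 + window3 g z.+2 + window3 g z.+3 <= 3.
    rewrite -sum_windows -(periodic_sum_shift z (periodic_window3 gP)).
    rewrite (big_cat_nat _ (n := 4)) //= !big_nat_recl // big_geq // addr0.
    by rewrite !add0n !addSn !addrA lerDl sumr_ge0.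
  lia.
- move/existsPn => no1.
  have window0 k : window3 g k = 0.
    have N_gt0 : (0 < N)%N by lia.
    have ne1 j : g j != 1.
      by rewrite -(periodic_mod j gP); exact: (no1 (Ordinal (ltn_pmod j N_gt0))).
    move: (win_le1 k) (window_ge0 k) (ne1 k) (ne1 k.+1) (ne1 k.+2).
    rewrite /window3.
    by move: (g_val k) (g_val k.+1) (g_val k.+2) => /srdf_valueP[]->/srdf_valueP[]->/srdf_valueP[]->; lia.
  by move: sum_windows; rewrite big1 // => k _; rewrite window0.
Qed.

Lemma value_le1_mod3_eq1 : (N %% 3 = 1)%N -> forall y, g y <= 1.
Proof.
move=> N3 y; have N_eq : N = (3 * (N %/ 3)).+1 by lia.
have := periodic_sum_shift y.+1 gP.
rewrite sum_g {1}N_eq big_nat_recr //= -sum_window3_blocks.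
rewrite (_ : (3 * (N %/ 3) + y.+1 = y + N)%N) ?gP; last lia.
have : 0 <= \sum_(0 <= t < N %/ 3) window3 g (3 * t + y.+1)%N by rewrite sumr_ge0.
lia.
Qed.

Lemma nonnegative_windows_mod3_eq1 : (N %% 3 = 1)%N -> False.
Proof.
move=> N3; have g_le1 := value_le1_mod3_eq1 N3.
have window_ge1 k : 1 <= window3 g k.
  move: (g_le1 k) (g_le1 k.+1) (g_le1 k.+2) (window_ge0 k); rewrite /window3.
  by move: (g_val k) (g_val k.+1) (g_val k.+2) => /srdf_valueP[]->/srdf_valueP[]->/srdf_valueP[]->; lia.
have : \sum_(0 <= k < N) (1 : int) <= \sum_(0 <= k < N) window3 g k by apply: ler_sum.
rewrite sum_windows sumr_const_nat subn0 ler_nat; lia.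
Qed.

Lemma no_unit_sum_nonneg_windows : (N %% 3 != 2)%N -> False.
Proof.
move=> N3; have [] : (N %% 3 = 0 \/ N %% 3 = 1)%N by lia.
  exact: nonnegative_windows_mod3_eq0.
exact: nonnegative_windows_mod3_eq1.
Qed.

End UnitSumNonnegWindows.

Lemma join_nbhd_sum_inl (T1 T2 : finType) (a1 : rel T1) (a2 : rel T2)
    (f : T1 + T2 -> int) (x : T1) :
  \sum_(y in closed_nbhd (join_adj a1 a2) (inl x)) f y =
  \sum_(y in closed_nbhd a1 x) f (inl y) + \sum_y f (inr y).
Proof.
rewrite big_mkcond big_sumType /= [in RHS]big_mkcond.
by congr (_ + _); apply: eq_bigr => y _; rewrite !inE.
Qed.

Lemma join_nbhd_sum_inr (T1 T2 : finType) (a1 : rel T1) (a2 : rel T2)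
    (f : T1 + T2 -> int) (x : T2) :
  \sum_(y in closed_nbhd (join_adj a1 a2) (inr x)) f y =
  \sum_y f (inl y) + \sum_(y in closed_nbhd a2 x) f (inr y).
Proof.
rewrite big_mkcond big_sumType /= [X in _ = _ + X]big_mkcond.
by congr (_ + _); apply: eq_bigr => y _; rewrite !inE.
Qed.

Lemma succ_mod_cases p x : (x < p.+1)%N ->
  (x = p /\ x.+1 %% p.+1 = 0 \/ x < p /\ x.+1 %% p.+1 = x.+1)%N.
Proof.
move=> x_lt; case: (ltngtP x p) => [x_lt_p|//|->]; last by left; rewrite modnn.
  by right; rewrite modn_small.
lia.
Qed.

Lemma pred_mod_cases p x : (x < p.+1)%N ->
  (x = 0 /\ (x + p) %% p.+1 = p \/ 0 < x /\ (x + p) %% p.+1 = x.-1)%N.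
Proof.
case: x => [|x] x_lt; first by left; rewrite add0n modn_small.
by right; rewrite addSnnS addnC modnDl modn_small // ltnW.
Qed.

Lemma mem_closed_nbhd_cycle p (i j : 'I_p.+1) :
  (j \in closed_nbhd (cycle_adj p.+1) i) = [|| j == i, j == inZp i.+1 | j == inZp (i + p)].
Proof.
rewrite inE /cycle_adj -!val_eqE /=.
have := succ_mod_cases (ltn_ord i); have := pred_mod_cases (ltn_ord i).
have := succ_mod_cases (ltn_pmod (i + p) (ltn0Sn p)); have := succ_mod_cases (ltn_ord j).
move: (j.+1 %% p.+1)%N (((i + p) %% p.+1).+1 %% p.+1)%N ((i + p) %% p.+1)%N (i.+1 %% p.+1)%N.
move=> d c b a; lia.
Qed.

Lemma cycle_nbhd_sum p (h : 'I_p.+1 -> int) (i : 'I_p.+1) : (2 <= p)%N ->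
  \sum_(j in closed_nbhd (cycle_adj p.+1) i) h j =
  h (inZp (i + p)) + h i + h (inZp i.+1).
Proof.
move=> p_ge2.
have neighbours_neq : [&& i != inZp i.+1, i != inZp (i + p) & inZp i.+1 != inZp (i + p) :> 'I_p.+1].
  rewrite -!val_eqE /=.
  have := succ_mod_cases (ltn_ord i); have := pred_mod_cases (ltn_ord i).
  move: ((i + p) %% p.+1)%N (i.+1 %% p.+1)%N => b a; lia.
case/and3P: neighbours_neq => ne_i_succ ne_i_pred ne_succ_pred.
rewrite (bigD1 i) ?mem_closed_nbhd_cycle ?eqxx //= (bigD1 (inZp i.+1)) /=; last first.
  by rewrite mem_closed_nbhd_cycle eqxx orbT eq_sym ne_i_succ.
rewrite (bigD1 (inZp (i + p))) /=; last first.
  by rewrite mem_closed_nbhd_cycle eqxx !orbT eq_sym ne_i_pred eq_sym ne_succ_pred.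
rewrite big1 ?addr0; first ring.
by move=> j; rewrite mem_closed_nbhd_cycle; case: (j == i) (j == inZp i.+1) (j == inZp (i + p)) => [] [] [].
Qed.

Definition unroll p (h : 'I_p.+1 -> int) (k : nat) : int := h (inZp k).

Section Unroll.

Variables (p : nat) (h : 'I_p.+1 -> int).

Lemma periodic_unroll : periodic p.+1 (unroll h).
Proof. by move=> k; congr h; apply: val_inj => /=; rewrite modnDr. Qed.

Lemma sum_unroll : \sum_(0 <= k < p.+1) unroll h k = \sum_i h i.
Proof. by rewrite big_mkord; apply: eq_bigr => i _; rewrite /unroll valZpK. Qed.

Lemma cycle_nbhd_sum_unroll k : (2 <= p)%N ->
  \sum_(j in closed_nbhd (cycle_adj p.+1) (inZp k.+1)) h j = window3 (unroll h) k.
Proof.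
move=> p_ge2; rewrite cycle_nbhd_sum // /window3 /unroll.
have -> : inZp (@inZp p k.+1 + p) = inZp k :> 'I_p.+1.
  by apply: val_inj => /=; rewrite modnDml addSnnS modnDr.
have -> // : inZp (@inZp p k.+1).+1 = inZp k.+2 :> 'I_p.+1.
by apply: val_inj => /=; rewrite -addn1 modnDml addn1.
Qed.

Lemma cycle_weight_bound (G : int) : (2 <= p)%N ->
  (forall i, 1 <= \sum_(j in closed_nbhd (cycle_adj p.+1) i) h j + G) ->
  p.+1%:Z * (1 - G) <= 3 * \sum_i h i.
Proof.
move=> p_ge2 nbhd_h; rewrite -sum_unroll.
apply: periodic_window_bound periodic_unroll _ => k.
by rewrite -cycle_nbhd_sum_unroll.
Qed.

End Unroll.

(* On C_M this reads (2,-1,-1)^(q-1) (e,1,-1) for M = 3q and (2,-1,-1)^q e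
   for M = 3q + 1, so it sums to e and every window meets a multiple of 3. *)
Definition block_pattern (M : nat) (e : int) (k : nat) : int :=
  if (k %% 3 == 0)%N then (if (M <= k + 3)%N then e else 2)
  else if (M <= k + 2)%N && (k %% 3 == 1)%N then 1 else -1.

Section BlockPattern.

Variables (M : nat) (e : int).
Hypothesis e12 : e = 1 \/ e = 2.

Lemma block_pattern_last k : (k %% 3 = 0)%N -> (M <= k + 3)%N -> block_pattern M e k = e.
Proof. by rewrite /block_pattern => -> ->. Qed.

Lemma block_pattern_two k : (k %% 3 = 0)%N -> (k + 3 < M)%N -> block_pattern M e k = 2.
Proof. by rewrite /block_pattern => -> k_lt; rewrite ifF //; lia. Qed.

Lemma block_pattern_one k : (k %% 3 = 1)%N -> (M <= k + 2)%N -> block_pattern M e k = 1.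
Proof. by rewrite /block_pattern => -> k_ge; rewrite /= k_ge. Qed.

Lemma block_pattern_neg k : ((k %% 3 = 1)%N /\ (k + 2 < M)%N) \/ (k %% 3 = 2)%N ->
  block_pattern M e k = -1.
Proof. by rewrite /block_pattern => k_mod; rewrite ifF ?ifF //; lia. Qed.

Lemma block_pattern_mem k : block_pattern M e k \in [:: -1; 1; 2].
Proof. by case: e12 => ->; rewrite /block_pattern; repeat case: ifP. Qed.

Lemma block_pattern_ge k : -1 <= block_pattern M e k.
Proof. by case: e12 => ->; rewrite /block_pattern; repeat case: ifP. Qed.

Lemma block_pattern_ge_mod3_eq0 k : (k %% 3 = 0)%N -> e <= block_pattern M e k.
Proof. by case: e12 => -> k_mod; rewrite /block_pattern k_mod /=; case: ifP. Qed.

Lemma sum_block_pattern_blocks t : (3 * t < M)%N ->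
  \sum_(0 <= k < 3 * t) block_pattern M e k = 0.
Proof.
elim: t => [|t IH] t_lt; first by rewrite big_geq.
rewrite (_ : (3 * t.+1 = (3 * t).+2.+1)%N); last lia.
rewrite !big_nat_recr //= IH; last lia.
by rewrite block_pattern_two ?block_pattern_neg; lia.
Qed.

Lemma sum_block_pattern : (3 <= M)%N -> (M %% 3 != 2)%N ->
  \sum_(i < M) block_pattern M e i = e.
Proof.
move=> M_ge3 M_mod; rewrite -(big_mkord xpredT).
have [M3 | M3] : (M %% 3 = 0 \/ M %% 3 = 1)%N by lia.
- rewrite [X in \sum_(0 <= _ < X) _](_ : M = (3 * (M %/ 3).-1).+2.+1)%N; last lia.
  rewrite !big_nat_recr //= sum_block_pattern_blocks; last lia.
  by rewrite block_pattern_last 1?block_pattern_one 1?block_pattern_neg; lia.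
- rewrite [X in \sum_(0 <= _ < X) _](_ : M = (3 * (M %/ 3)).+1)%N; last lia.
  rewrite big_nat_recr //= sum_block_pattern_blocks; last lia.
  by rewrite block_pattern_last ?add0r; lia.
Qed.

End BlockPattern.

Lemma cycle_nbhd_sum_block_pattern p (e : int) (i : 'I_p.+1) : (2 <= p)%N -> e = 1 \/ e = 2 ->
  e - 2 <= \sum_(j in closed_nbhd (cycle_adj p.+1) i) block_pattern p.+1 e j.
Proof.
move=> p_ge2 e12; rewrite cycle_nbhd_sum //=.
have succ_i := succ_mod_cases (ltn_ord i); have pred_i := pred_mod_cases (ltn_ord i).
have ge1 := block_pattern_ge p.+1 e12 ((i + p) %% p.+1).
have ge2 := block_pattern_ge p.+1 e12 i.
have ge3 := block_pattern_ge p.+1 e12 (i.+1 %% p.+1).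
have : ((i + p) %% p.+1 %% 3 = 0 \/ i %% 3 = 0 \/ i.+1 %% p.+1 %% 3 = 0)%N.
  by move: succ_i pred_i; move: ((i + p) %% p.+1)%N (i.+1 %% p.+1)%N => b a; lia.
by case=> [|[|]] /(block_pattern_ge_mod3_eq0 p.+1 e12); lia.
Qed.

Lemma join_cycles_srdf_weight3 p r : (3 <= p)%N -> (3 <= r)%N ->
  (p.+1 %% 3 != 2)%N -> (r.+1 %% 3 != 2)%N ->
  exists f, is_SRDF (join_adj (cycle_adj p.+1) (cycle_adj r.+1)) f /\ srdf_weight f = 3.
Proof.
move=> p_ge3 r_ge3 p_mod r_mod.
have e1 : (1 : int) = 1 \/ (1 : int) = 2 by left.
have e2 : (2 : int) = 1 \/ (2 : int) = 2 by right.
have sum1 : \sum_(i < p.+1) block_pattern p.+1 1 i = 1 by apply: sum_block_pattern; lia.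
have sum2 : \sum_(j < r.+1) block_pattern r.+1 2 j = 2 by apply: sum_block_pattern; lia.
exists (fun x : 'I_p.+1 + 'I_r.+1 => match x with
                 | inl i => block_pattern p.+1 1 i
                 | inr j => block_pattern r.+1 2 j end).
split; last by rewrite /srdf_weight big_sumType /= sum1 sum2.
split; [|split].
- by case=> [i|j]; apply: block_pattern_mem.
- case=> [i|j]; [rewrite join_nbhd_sum_inl /= sum2 | rewrite join_nbhd_sum_inr /= sum1].
  + by rewrite -lerBlDr; exact: cycle_nbhd_sum_block_pattern (ltnW p_ge3) e1.
  + by rewrite addrC -lerBlDr subrr; exact: cycle_nbhd_sum_block_pattern (ltnW r_ge3) e2.
- case=> [i|j] _.
  + by exists (inr ord0); split=> //=; apply: block_pattern_two; lia.
  + by exists (inl ord0); split=> //=; apply: block_pattern_two; lia.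
Qed.

Lemma join_side_weights_eq1 (M N : nat) (F G : int) : (13 <= M)%N -> (13 <= N)%N ->
  M%:Z * (1 - G) <= 3 * F -> N%:Z * (1 - F) <= 3 * G -> F + G < 3 -> F = 1 /\ G = 1.
Proof. by move=> M_ge N_ge; nia. Qed.

Lemma join_cycles_srdf_weight_ge3 p r (f : 'I_p.+1 + 'I_r.+1 -> int) :
  (12 <= p)%N -> (12 <= r)%N -> (p.+1 %% 3 != 2)%N ->
  is_SRDF (join_adj (cycle_adj p.+1) (cycle_adj r.+1)) f -> 3 <= srdf_weight f.
Proof.
move=> p_ge r_ge p_mod [f_val [f_nbhd _]].
set F := \sum_i f (inl i); set G := \sum_j f (inr j).
have nbhd_l i : 1 <= \sum_(j in closed_nbhd (cycle_adj p.+1) i) f (inl j) + G.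
  by have := f_nbhd (inl i); rewrite join_nbhd_sum_inl.
have nbhd_r j : 1 <= \sum_(i in closed_nbhd (cycle_adj r.+1) j) f (inr i) + F.
  by have := f_nbhd (inr j); rewrite join_nbhd_sum_inr addrC.
have p_ge2 : (2 <= p)%N by lia.
have r_ge2 : (2 <= r)%N by lia.
have bound_l : p.+1%:Z * (1 - G) <= 3 * F := cycle_weight_bound p_ge2 nbhd_l.
have bound_r : r.+1%:Z * (1 - F) <= 3 * G := cycle_weight_bound r_ge2 nbhd_r.
rewrite /srdf_weight big_sumType /= -/F -/G leNgt; apply/negP => weight_lt3.
have [F1 G1] := join_side_weights_eq1 (M := p.+1) (N := r.+1) p_ge r_ge bound_l bound_r weight_lt3.
apply: (@no_unit_sum_nonneg_windows p.+1 (unroll (fun i => f (inl i)))).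
- lia.
- exact: periodic_unroll.
- by move=> k; apply: f_val.
- by rewrite sum_unroll -/F F1.
- move=> k; rewrite -cycle_nbhd_sum_unroll //=.
  by have := nbhd_l (inZp k.+1); rewrite G1 -lerBlDr subrr.
- exact: p_mod.
Qed.

Theorem mainTheorem11 (m n : nat) :
  (13 <= m)%N -> (13 <= n)%N -> (m %% 3 != 2)%N -> (n %% 3 != 2)%N ->
  signed_roman_domination_number_is (join_adj (cycle_adj m) (cycle_adj n)) 3.
Proof.
case: m => [|p] // m_ge; case: n => [|r] // n_ge m_mod n_mod.
split; first by apply: join_cycles_srdf_weight3 => //; lia.
by move=> f; apply: join_cycles_srdf_weight_ge3.
Qed.
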